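(* Let $d\ge1$ and $C\subset\mathbb R^d$ an adapted cone, and set $a=\mathbb P(\xi_1\in C)^{-1}$. If $\mathbb E\big(\Vert\xi_1\Vert^2a^{\Vert\xi_1\Vert^2}\big)<\infty$, then $\mathbb P(T_C>n)\ge a^{-n}$ for all $n$, and $\mathbb P\big(\max_{1\le i\le n}\Vert\xi_i\Vert>\sqrt n\,\big|\,T_C>n\big)\to0$ as $n\to\infty$.
   Context: $(\xi_n)_{n\ge1}$ i.i.d. random vectors in $\mathbb R^d$ with mean zero and covariance $\sigma^2I_d$, $\sigma^2>0$; $S_n=\xi_1+\cdots+\xi_n$. A linear cone $C$ ($\lambda C=C$ for all $\lambda>0$) is adapted if convex, with non-empty interior, and $\mathbb P(\xi_1\in C\setminus\{0\})>0$. $T_C=\inf\{n\ge1:S_n\notin C\}$. *)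

From HB Require Import structures.
From mathcomp Require Import all_boot all_order all_algebra.
From mathcomp Require Import all_classical all_reals all_analysis.
Set Implicit Arguments. Unset Strict Implicit. Unset Printing Implicit Defensive.
Import Order.TTheory GRing.Theory Num.Theory.
Import numFieldNormedType.Exports.
Local Open Scope classical_set_scope.
Local Open Scope ring_scope.

(* Vectors of R^d are row vectors 'rV[R]_d, with the product (= Euclidean) topology. *)

Definition enorm (R : realType) (d : nat) (v : 'rV[R]_d) : R :=
  Num.sqrt (\sum_(j < d) v 0 j ^+ 2).

Definition borel_rV (R : realType) (d : nat) : set (set 'rV[R]_d) :=
  <<s [set A : set 'rV[R]_d | open A] >>.

Definition random_vector (dT : measure_display) (T : measurableType dT)
  (R : realType) (d : nat) (X : T -> 'rV[R]_d) : Prop :=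
  forall B, borel_rV B -> measurable (X @^-1` B).

Definition independent_vectors (dT : measure_display) (T : measurableType dT)
  (R : realType) (d : nat) (P : probability T R) (X : nat -> T -> 'rV[R]_d) : Prop :=
  forall (s : seq nat) (B : nat -> set 'rV[R]_d),
    uniq s -> (forall i, borel_rV (B i)) ->
    P (\big[setI/setT]_(i <- s) (X i @^-1` B i)) =
    (\prod_(i <- s) P (X i @^-1` B i))%E.

Definition identically_distributed (dT : measure_display) (T : measurableType dT)
  (R : realType) (d : nat) (P : probability T R) (X : nat -> T -> 'rV[R]_d) : Prop :=
  forall n B, borel_rV B -> P (X n @^-1` B) = P (X 0%N @^-1` B).

Definition linear_cone (R : realType) (d : nat) (C : set 'rV[R]_d) : Prop :=
  forall l : R, 0 < l -> [set l *: x | x in C] = C.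

Definition convex_set_rV (R : realType) (d : nat) (C : set 'rV[R]_d) : Prop :=
  forall x y (t : R), C x -> C y -> 0 <= t -> t <= 1 -> C (t *: x + (1 - t) *: y).

Definition adapted_cone (dT : measure_display) (T : measurableType dT)
  (R : realType) (d : nat) (P : probability T R) (xi1 : T -> 'rV[R]_d)
  (C : set 'rV[R]_d) : Prop :=
  [/\ linear_cone C, convex_set_rV C, interior C !=set0 &
      (0 < P (xi1 @^-1` (C `\ (0%R : 'rV[R]_d))))%E].

(* S_n = xi_1 + ... + xi_n, where xi_{i+1} is represented by xi i *)
Definition partial_sum (T : Type) (R : realType) (d : nat)
  (xi : nat -> T -> 'rV[R]_d) (n : nat) (w : T) : 'rV[R]_d :=
  \sum_(i < n) xi i w.

(* The event {T_C > n} = {S_1, ..., S_n all in C} *)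
Definition exit_after (T : Type) (R : realType) (d : nat)
  (xi : nat -> T -> 'rV[R]_d) (C : set 'rV[R]_d) (n : nat) : set T :=
  [set w | forall k, (1 <= k <= n)%N -> C (partial_sum xi k w)].

Definition big_jump (T : Type) (R : realType) (d : nat)
  (xi : nat -> T -> 'rV[R]_d) (n : nat) : set T :=
  [set w | exists i : 'I_n, Num.sqrt (n%:R) < enorm (xi i w)].

From HB Require Import structures.
From mathcomp Require Import all_boot all_order all_algebra.
From mathcomp Require Import all_classical all_reals all_analysis.
From mathcomp Require Import measurable_realfun lra.
Import Order.TTheory GRing.Theory Num.Theory.
Import numFieldNormedType.Exports.
Local Open Scope classical_set_scope.
Local Open Scope ring_scope.

(* Since [C] is a convex cone, [T_C > n] as soon as each of [xi_1, ..., xi_n]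
   lies in [C]; by independence this has probability [p ^ n] with
   [p = P(xi_1 \in C) = 1 / a].  For the second claim, a union bound gives
   [P(max_i |xi_i| > sqrt n) <= n P(|xi_1| > sqrt n)], so dividing by
   [P(T_C > n) >= a ^ -n] the conditional probability is at most
   [n a ^ n P(|xi_1| > sqrt n) <= E(|xi_1|^2 a ^ |xi_1|^2 ; |xi_1| > sqrt n)],
   which tends to [0] by dominated convergence under the moment assumption. *)

Section euclidean_space.
Context {R : realType} {d : nat}.

Lemma borel_rV_open (U : set 'rV[R]_d) : open U -> borel_rV U.
Proof. by move=> oU; apply: sub_gen_smallest. Qed.

Lemma continuous_enorm : continuous (@enorm R d).
Proof.
have sum_sq_cont (s : seq 'I_d) :
    continuous (fun v : 'rV[R]_d => \sum_(j <- s) v 0 j ^+ 2).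
  elim: s => [|j s IHs] v.
    by under eq_fun do rewrite big_nil; exact: cst_continuous.
  under eq_fun do rewrite big_cons.
  apply: continuousD (IHs v).
  by apply: continuousM; exact: coord_continuous.
move=> v; apply: continuous_comp; first exact: sum_sq_cont.
exact: sqrt_continuous.
Qed.

Definition enorm_gt (r : R) : set 'rV[R]_d :=
  [set v | r < enorm v].

Lemma borel_enorm_gt (r : R) : borel_rV (enorm_gt r).
Proof.
apply: borel_rV_open; apply: (@open_comp _ _ _ [set x | r < x]); last exact: open_gt.
by move=> v _; exact: continuous_enorm.
Qed.

Definition rat_box (c : 'rV[rat]_d) (r : rat) : set 'rV[R]_d :=
  [set v | forall j, ratr (c 0 j) - ratr r < v 0 j < ratr (c 0 j) + ratr r].

Definition rat_box_in (U : set 'rV[R]_d) (n : nat) : set 'rV[R]_d :=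
  if unpickle n is Some (c, r) then
    if pselect (rat_box c r `<=` U) then rat_box c r else set0
  else set0.

Lemma open_bigcup_rat_box_in (U : set 'rV[R]_d) :
  open U -> U = \bigcup_n rat_box_in U n.
Proof.
move=> oU; apply/seteqP; split=> [v Uv|v [n _]]; last first.
  rewrite /rat_box_in; case: unpickle => [[c r]|//]; by case: pselect => // boxU /boxU.
have /nbhs_ballP[e e_gt0 ballU] := oU _ Uv.
have [r] := @rat_in_itvoo R 0 (e / 2) ltac:(by rewrite divr_gt0).
rewrite in_itv /= => /andP[r_gt0 r_lt].
have [c cP] : {c : 'I_d -> rat &
    forall j, ratr (c j) \in `]v 0 j - ratr r, v 0 j + ratr r[}.
  apply: (@choice _ _ (fun j q => ratr q \in `]v 0 j - ratr r, v 0 j + ratr r[)) => j.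
  have [|q qP] := @rat_in_itvoo R (v 0 j - ratr r) (v 0 j + ratr r); last by exists q.
  by rewrite ltrBlDr -addrA ltrDl addr_gt0.
have boxU : rat_box (\row_j c j) r `<=` U.
  move=> u uP; apply: ballU; split => // i j; rewrite (ord1 i) /ball /=.
  have := uP j; have := cP j; rewrite mxE in_itv /= => /andP[? ?] /andP[? ?].
  by rewrite ltr_norml; apply/andP; split; lra.
exists (pickle (\row_j c j, r)) => //.
rewrite /rat_box_in pickleK; case: pselect => // _ j.
by have := cP j; rewrite mxE in_itv /= => /andP[? ?]; apply/andP; split; lra.
Qed.

End euclidean_space.

Arguments rat_box R {d}.

Section convex_cone.
Variables (R : realType) (d : nat) (C : set 'rV[R]_d).
Hypotheses (C_cone : linear_cone C) (C_convex : convex_set_rV C).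

Lemma convex_coneD x y : C x -> C y -> C (x + y).
Proof.
move=> Cx Cy; rewrite -(C_cone _ (ltr0Sn R 1)).
exists (2^-1 *: x + (1 - 2^-1) *: y); first by apply: C_convex => //; lra.
have -> : (1 - 2^-1 : R) = 2^-1 by lra.
by rewrite scalerDr !scalerA divff ?pnatr_eq0 // !scale1r.
Qed.

Lemma partial_sum_in_cone (T : Type) (xi : nat -> T -> 'rV[R]_d) w n :
  (forall i, (i < n)%N -> C (xi i w)) ->
  forall k, (1 <= k <= n)%N -> C (partial_sum xi k w).
Proof.
move=> xiC; elim=> // k IHk /andP[_ kn].
rewrite /partial_sum big_ord_recr /=.
case: k IHk kn => [|k] IHk kn; first by rewrite big_ord0 add0r; exact: xiC.
by apply: convex_coneD; [apply: IHk; rewrite (ltnW kn) | exact: xiC].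
Qed.

End convex_cone.

Section sq_exp_weight.
Context {R : realType}.
Implicit Types a t : R.

Definition sq_exp_weight a t : R := t ^+ 2 * a `^ (t ^+ 2).

Lemma sq_exp_weight_ge0 a t : 0 <= sq_exp_weight a t.
Proof. by rewrite mulr_ge0 ?sqr_ge0 ?powR_ge0. Qed.

Lemma measurable_sq_exp_weight a :
  measurable_fun setT (sq_exp_weight a).
Proof.
have msq : measurable_fun setT (fun t : R => t ^+ 2).
  exact: measurable_funX (@measurable_id _ R setT).
apply: measurable_funM => //.
exact: measurableT_comp (measurable_powRr a) msq.
Qed.

Lemma sq_exp_weight_ge a t (n : nat) :
  1 <= a -> Num.sqrt n%:R < t -> n%:R * a ^+ n <= sq_exp_weight a t.
Proof.
move=> a_ge1 sqrt_lt.
have n_le : n%:R <= t ^+ 2.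
  have := sqr_sqrtr (ler0n R n); have := sqrtr_ge0 (n%:R : R); nra.
apply: ler_pM => //; first by rewrite exprn_ge0 // (le_trans _ a_ge1).
by rewrite -powR_mulrn ?(le_trans _ a_ge1) //; exact: ler_powR.
Qed.

End sq_exp_weight.

Lemma sqrt_natr_ge_eventually {R : realType} (t : R) :
  \forall n \near \oo, t <= Num.sqrt n%:R.
Proof.
exists (Num.truncn (t ^+ 2)).+1 => // n /= n_gt.
rewrite (le_trans (ler_norm t)) // -sqrtr_sqr ler_sqrt // ltW //.
by rewrite (lt_le_trans (truncnS_gt _)) // ler_nat.
Qed.

Section random_vector.
Context {R : realType} {dT : measure_display} {T : measurableType dT} {d : nat}.
Implicit Types X : T -> 'rV[R]_d.

Lemma measurable_fun_random_vector {X} {f : 'rV[R]_d -> R} :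
  continuous f -> random_vector X -> measurable_fun setT (f \o X).
Proof.
move=> f_cont rX.
apply: (@measurability _ _ _ R setT _ (RGenOpens.G (R:=R))).
  exact: RGenOpens.measurableE.
move=> _ [_ [x [y ->]] <-]; rewrite setTI.
apply: (rX (f @^-1` `]x, y[%classic)); apply: borel_rV_open.
by apply: open_comp; [move=> v _; exact: f_cont | exact: itv_open].
Qed.

Lemma measurable_preimage_rat_box X c r :
  (forall j, measurable_fun setT (fun w => X w 0 j)) ->
  measurable (X @^-1` rat_box R c r).
Proof.
move=> mX.
have -> : X @^-1` rat_box R c r = \bigcap_(j in [set: 'I_d])
    ((fun w => X w 0 j) @^-1` `]ratr (c 0 j) - ratr r, ratr (c 0 j) + ratr r[%classic).
  apply/seteqP; split=> w /= wP j; first by move=> _; rewrite /= in_itv; exact: wP.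
  by have := wP j I; rewrite /= in_itv.
apply: fin_bigcap_measurable; first exact: finite_finset.
by move=> j _; rewrite -[X in measurable X]setTI; apply: mX.
Qed.

(* Open sets of [R^d] are countable unions of rational boxes, so coordinatewise
   measurability suffices. *)
Lemma random_vector_coord X :
  (forall j, measurable_fun setT (fun w => X w 0 j)) -> random_vector X.
Proof.
move=> mX; apply: (@smallest_sub _ _ _ [set B | measurable (X @^-1` B)]); last first.
  move=> U /open_bigcup_rat_box_in ->; rewrite /= preimage_bigcup.
  apply: bigcupT_measurable => n; rewrite /rat_box_in.
  case: unpickle => [[c r]|]; last by rewrite preimage_set0.
  case: pselect => ?; last by rewrite preimage_set0.
  exact: measurable_preimage_rat_box.
split.
- by rewrite /= preimage_set0.
- by move=> A mA; rewrite /= setTD preimage_setC; exact: measurableC.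
- by move=> A mA; rewrite /= preimage_bigcup; exact: bigcupT_measurable.
Qed.

Lemma random_vector_partial_sum (xi : nat -> T -> 'rV[R]_d) n :
  (forall i, random_vector (xi i)) -> random_vector (partial_sum xi n).
Proof.
move=> xi_rv; apply: random_vector_coord => j.
rewrite (_ : (fun w => _) = (fun w => \sum_(i < n) xi i w 0 j)); last first.
  by apply: funext => w; rewrite /partial_sum summxE.
elim: n => [|n IHn].
  by under eq_fun do rewrite big_ord0; exact: measurable_cst.
under eq_fun do rewrite big_ord_recr /=.
apply: measurable_funD IHn _.
exact: measurable_fun_random_vector (@coord_continuous _ _ _ 0 j) (xi_rv n).
Qed.

Lemma measurable_sq_exp_weight_enorm X (a : R) :
  random_vector X -> measurable_fun setT (fun w => sq_exp_weight a (enorm (X w))).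
Proof.
move=> rX; have := measurable_fun_random_vector continuous_enorm rX.
exact: measurableT_comp (measurable_sq_exp_weight a).
Qed.

Lemma sq_exp_moment_tail_ge (mu : measure T R) X (a : R) n :
  1 <= a -> random_vector X ->
  ((n%:R * a ^+ n)%:E * mu (X @^-1` enorm_gt (Num.sqrt n%:R)) <=
   \int[mu]_(w in X @^-1` enorm_gt (Num.sqrt n%:R)) (sq_exp_weight a (enorm (X w)))%:E)%E.
Proof.
move=> a_ge1 rX; have mB := rX _ (borel_enorm_gt (Num.sqrt n%:R)).
rewrite -integral_cst //; apply: ge0_le_integral => //.
- by move=> w _; rewrite lee_fin mulr_ge0 // exprn_ge0 // (le_trans _ a_ge1).
- apply/measurable_EFinP; apply: measurable_funS (subsetT _) _ => //.
  exact: measurable_sq_exp_weight_enorm.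
- by move=> w Bw; rewrite lee_fin; exact: sq_exp_weight_ge.
Qed.

End random_vector.

Lemma big_jump_bigsetU (T : Type) (R : realType) (d : nat)
    (xi : nat -> T -> 'rV[R]_d) n :
  big_jump xi n = \big[setU/set0]_(i < n) (xi i @^-1` enorm_gt (Num.sqrt n%:R)).
Proof.
rewrite -(bigcup_mkord n (fun i => xi i @^-1` _)); apply/seteqP.
rewrite /big_jump; split=> w /= [i]; first by exists i => //=.
by move=> /= i_lt; exists (Ordinal i_lt).
Qed.

Lemma integral_tail_cvg0 (dT : measure_display) (T : measurableType dT)
    (R : realType) (mu : measure T R) (f : T -> \bar R) (A : nat -> set T) :
  mu.-integrable setT f -> (forall n, measurable (A n)) ->
  (forall w, \forall n \near \oo, ~ A n w) ->
  (\int[mu]_(w in A n) f w)%E @[n --> \oo] --> 0%E.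
Proof.
move=> fint mA A_eventually.
have mfA n : measurable_fun setT (f \_ (A n)).
  apply/(measurable_restrictT _ (mA n)).1.
  by apply: measurable_funS (subsetT _) _ => //; case/integrableP: fint.
have fA_cvg0 : \forall w \ae mu, setT w -> f \_ (A n) w @[n --> \oo] --> 0%E.
  apply: aeW => w _; apply: cvg_near_cst; apply: filterS (A_eventually w) => n nAw.
  by rewrite patchE ifF //; apply/negbTE; rewrite notin_setE.
have fA_dom : \forall w \ae mu, forall n, setT w -> (`|f \_ (A n) w| <= `|f w|)%E.
  by apply: aeW => w n _; rewrite patchE; case: ifP; rewrite ?abse0.
have [_ _] := dominated_convergence measurableT mfA (measurable_cst _) fA_cvg0
  (integrable_abse fint) fA_dom.
by rewrite integral0; under eq_fun do rewrite -integral_mkcond.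
Qed.

Section iid_random_walk.
Context (R : realType) (dT : measure_display) (T : measurableType dT)
  (P : probability T R) (d : nat) (xi : nat -> T -> 'rV[R]_d).
Hypotheses (xi_rv : forall n, random_vector (xi n))
  (xi_indep : independent_vectors P xi) (xi_id : identically_distributed P xi).

Lemma measurable_big_jump n : measurable (big_jump xi n).
Proof.
rewrite big_jump_bigsetU; apply: bigsetU_measurable => i _.
exact: xi_rv _ (borel_enorm_gt _).
Qed.

Lemma prob_big_jump_le n :
  (P (big_jump xi n) <= P (xi 0%N @^-1` enorm_gt (Num.sqrt n%:R)) *+ n)%E.
Proof.
have mB i : measurable (xi i @^-1` enorm_gt (Num.sqrt n%:R)).
  exact: xi_rv _ (borel_enorm_gt _).
rewrite big_jump_bigsetU; apply: le_trans (Boole_inequality P (fun i _ => mB i)) _.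
rewrite (eq_bigr (fun=> P (xi 0%N @^-1` enorm_gt (Num.sqrt n%:R)))).
  by rewrite sumr_const card_ord.
by move=> i _; exact: xi_id _ _ (borel_enorm_gt _).
Qed.

Variable C : set 'rV[R]_d.
Hypotheses (C_borel : borel_rV C) (C_cone : linear_cone C) (C_convex : convex_set_rV C).

Lemma prob_in_C_gt0 :
  (0 < P (xi 0%N @^-1` (C `\ (0%R : 'rV[R]_d))))%E -> 0 < fine (P (xi 0%N @^-1` C)).
Proof.
move=> C0_pos; have mC : measurable (xi 0%N @^-1` C) by exact: xi_rv.
have mC0 : measurable (xi 0%N @^-1` (C `\ 0)).
  rewrite setDE preimage_setI; apply: measurableI => //.
  apply: xi_rv; apply: borel_rV_open; apply: closed_openC.
  by apply: accessible_closed_set1; apply: hausdorff_accessible; exact: norm_hausdorff.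
rewrite fine_gt0 // (lt_le_trans C0_pos) ?le_measure ?inE //=; last exact: subDsetl.
by rewrite (le_lt_trans (probability_le1 _ mC)) ?ltry.
Qed.

Lemma measurable_exit_after n : measurable (exit_after xi C n).
Proof.
rewrite (_ : exit_after xi C n =
  \bigcap_(k in [set k | (1 <= k <= n)%N]) (partial_sum xi k @^-1` C)) //.
by apply: bigcap_measurableType => k _; exact: random_vector_partial_sum.
Qed.

Lemma prob_exit_after_ge n :
  (((fine (P (xi 0%N @^-1` C))) ^+ n)%:E <= P (exit_after xi C n))%E.
Proof.
have steps_in_C : P (\big[setI/setT]_(i <- index_iota 0 n) xi i @^-1` C) =
    ((fine (P (xi 0%N @^-1` C))) ^+ n)%:E.
  rewrite xi_indep ?iota_uniq // (eq_bigr (fun=> (fine (P (xi 0%N @^-1` C)))%:E)).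
    by rewrite prodEFin prodr_const_nat subn0.
  by move=> i _; rewrite xi_id // fineK // fin_num_measure //; exact: xi_rv.
rewrite -steps_in_C; apply: le_measure; rewrite ?inE.
- by apply: bigsetI_measurable => i _; exact: xi_rv.
- exact: measurable_exit_after.
move=> w; rewrite -bigcap_seq => w_in; apply: partial_sum_in_cone => // i i_lt.
by apply: w_in; rewrite /= mem_index_iota.
Qed.

Hypothesis C_prob_gt0 : 0 < fine (P (xi 0%N @^-1` C)).

Lemma big_jump_given_exit_le n :
  (\int[P]_w (sq_exp_weight (fine (P (xi 0%N @^-1` C)))^-1 (enorm (xi 0%N w)))%:E
     < +oo)%E ->
  fine (P (big_jump xi n `&` exit_after xi C n)) / fine (P (exit_after xi C n)) <=
  fine (\int[P]_(w in xi 0%N @^-1` enorm_gt (Num.sqrt n%:R))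
          (sq_exp_weight (fine (P (xi 0%N @^-1` C)))^-1 (enorm (xi 0%N w)))%:E).
Proof.
set p := fine (P (xi 0%N @^-1` C)); set B := xi 0%N @^-1` enorm_gt _ => weight_int.
have mB : measurable B by exact: xi_rv _ (borel_enorm_gt _).
have mC : measurable (xi 0%N @^-1` C) by exact: xi_rv.
have mE := measurable_exit_after n.
have a_ge1 : 1 <= p^-1.
  by rewrite invf_ge1 // -lee_fin fineK ?fin_num_measure //; exact: probability_le1.
have jump_le : fine (P (big_jump xi n `&` exit_after xi C n)) <= fine (P B) *+ n.
  have mJE : measurable (big_jump xi n `&` exit_after xi C n).
    by apply: measurableI => //; exact: measurable_big_jump.
  rewrite -lee_fin fineK ?fin_num_measure // EFin_natmul fineK ?fin_num_measure //.
  apply: le_trans (prob_big_jump_le n); apply: le_measure; rewrite ?inE //.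
  exact: measurable_big_jump.
have exit_ge : p ^+ n <= fine (P (exit_after xi C n)).
  by rewrite -lee_fin fineK ?fin_num_measure //; exact: prob_exit_after_ge.
have moment_ge : n%:R * p^-1 ^+ n * fine (P B) <= fine (\int[P]_(w in B)
    (sq_exp_weight p^-1 (enorm (xi 0%N w)))%:E).
  have int_fin :
      (\int[P]_(w in B) (sq_exp_weight p^-1 (enorm (xi 0%N w)))%:E)%E \is a fin_num.
    rewrite ge0_fin_numE ?integral_ge0 // => [|w _]; last by rewrite lee_fin sq_exp_weight_ge0.
    apply: le_lt_trans weight_int; apply: ge0_subset_integral => //=.
    + by apply/measurable_EFinP; exact: measurable_sq_exp_weight_enorm.
    + by move=> w _; rewrite lee_fin sq_exp_weight_ge0.
  by rewrite -lee_fin fineK // EFinM fineK ?fin_num_measure //; exact: sq_exp_moment_tail_ge.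
apply: le_trans moment_ge; rewrite exprVn mulrAC.
have p_n_gt0 : 0 < p ^+ n by rewrite exprn_gt0.
apply: ler_pM; first by rewrite fine_ge0 ?measure_ge0.
- by rewrite invr_ge0 (le_trans (ltW p_n_gt0)).
- by rewrite mulr_natl.
- by rewrite lef_pV2 ?posrE // (lt_le_trans p_n_gt0).
Qed.

End iid_random_walk.

Theorem mainTheorem10 (R : realType) (dT : measure_display) (T : measurableType dT)
  (P : probability T R) (d : nat) (xi : nat -> T -> 'rV[R]_d) (sigma2 : R)
  (C : set 'rV[R]_d) :
  (1 <= d)%N ->
  (forall n, random_vector (xi n)) ->
  independent_vectors P xi ->
  identically_distributed P xi ->
  (forall j : 'I_d, P.-integrable setT (fun w => (xi 0%N w 0 j)%:E)) ->
  (forall j : 'I_d, (\int[P]_w (xi 0%N w 0 j)%:E = 0)%E) ->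
  0 < sigma2 ->
  (forall j k : 'I_d, P.-integrable setT (fun w => (xi 0%N w 0 j * xi 0%N w 0 k)%:E)) ->
  (forall j k : 'I_d,
     (\int[P]_w (xi 0%N w 0 j * xi 0%N w 0 k)%:E = (if j == k then sigma2 else 0)%:E)%E) ->
  borel_rV C ->
  adapted_cone P (xi 0%N) C ->
  let a := (fine (P (xi 0%N @^-1` C)))^-1 in
  (\int[P]_w (enorm (xi 0%N w) ^+ 2 * a `^ (enorm (xi 0%N w) ^+ 2))%:E < +oo)%E ->
  (forall n : nat, ((a ^- n)%:E <= P (exit_after xi C n))%E) /\
  ((fun n : nat => fine (P (big_jump xi n `&` exit_after xi C n))
                   / fine (P (exit_after xi C n))) @ \oo --> 0).
Proof.
move=> _ xi_rv xi_indep xi_id _ _ _ _ _ C_borel [C_cone C_convex _ C0_pos] a weight_int.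
have p_gt0 : 0 < fine (P (xi 0%N @^-1` C)) by exact: prob_in_C_gt0.
split => [n|]; first by rewrite /a exprVn invrK; exact: prob_exit_after_ge.
apply: (@squeeze_cvgr _ _ _ _ (fun=> 0) (fun n => fine (\int[P]_(w in
    xi 0%N @^-1` enorm_gt (Num.sqrt n%:R)) (sq_exp_weight a (enorm (xi 0%N w)))%:E))).
- apply: nearW => n; rewrite divr_ge0 ?fine_ge0 ?measure_ge0 //=.
  exact: big_jump_given_exit_le.
- exact: cvg_cst.
apply: fine_cvg; apply: integral_tail_cvg0 => [|n|w].
- apply/integrableP; split.
    by apply/measurable_EFinP; exact: measurable_sq_exp_weight_enorm.
  rewrite (eq_integral (fun w => (sq_exp_weight a (enorm (xi 0%N w)))%:E)) // => w _.
  by rewrite gee0_abs // lee_fin sq_exp_weight_ge0.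
- exact: xi_rv _ (borel_enorm_gt _).
- apply: filterS _ (sqrt_natr_ge_eventually (enorm (xi 0%N w))) => n /=.
  by rewrite leNgt => /negP.
Qed.
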